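(* Let $(Q,\star,e)$ be a double Ward quasigroup. Define $x\bullet y=(e\star x)\star y$. Then $(Q,\bullet)$ is a Ward quasigroup, i.e. a quasigroup satisfying $(x\bullet z)\bullet(y\bullet z)=x\bullet y$ for all $x,y,z\in Q$.
   Context: A quasigroup is a magma in which $ax=b$ and $ya=b$ have unique solutions for all $a,b$. A double Ward quasigroup $(Q,\star,e)$ is a quasigroup $(Q,\star)$ with an element $e$ such that $((e\star e)\star(x\star z))\star((e\star y)\star z)=x\star y$ for all $x,y,z\in Q$. *)

Definition is_quasigroup {Q : Type} (op : Q -> Q -> Q) : Prop :=
  (forall a b : Q, exists x : Q, op a x = b /\ forall x' : Q, op a x' = b -> x' = x) /\
  (forall a b : Q, exists y : Q, op y a = b /\ forall y' : Q, op y' a = b -> y' = y).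

Definition is_double_ward_quasigroup {Q : Type} (star : Q -> Q -> Q) (e : Q) : Prop :=
  is_quasigroup star /\
  forall x y z : Q,
    star (star (star e e) (star x z)) (star (star e y) z) = star x y.

Definition is_ward_quasigroup {Q : Type} (op : Q -> Q -> Q) : Prop :=
  is_quasigroup op /\
  forall x y z : Q, op (op x z) (op y z) = op x y.


Set Implicit Arguments.

(* Putting x := e * y in the double Ward identity and letting (e * y) * z
   range over all of Q gives ((e * e) * w) * w = (e * y) * y for all w, y;
   for w = y = e, two right cancellations yield e * e = e.  The identity then
   reads (e * (x * z)) * ((e * y) * z) = x * y, which for x := e * x is the
   Ward identity of x • y = (e * x) * y.  Finally • is a quasigroup because
   left multiplication by e is a bijection of Q. *)

Section Quasigroup.

Variables (Q : Type) (op : Q -> Q -> Q).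
Hypothesis op_quasigroup : is_quasigroup op.

Lemma quasigroup_cancel_r (a b s : Q) : op a s = op b s -> a = b.
Proof.
  intros Hab.
  destruct (proj2 op_quasigroup s (op b s)) as [y [_ Uy]].
  rewrite (Uy a Hab). symmetry. apply Uy. reflexivity.
Qed.

Lemma quasigroup_precompose_left_mul (e : Q) :
  is_quasigroup (fun x y => op (op e x) y).
Proof.
  destruct op_quasigroup as [HL HR]. split.
  - intros a b. exact (HL (op e a) b).
  - intros a b.
    destruct (HR a b) as [v [Hv Uv]].
    destruct (HL e v) as [y [Hy Uy]].
    exists y. split.
    + rewrite Hy. exact Hv.
    + intros y' Hy'. apply Uy, Uv, Hy'.
Qed.

End Quasigroup.

Section DoubleWard.

Variables (Q : Type) (star : Q -> Q -> Q) (e : Q).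
Hypothesis star_double_ward : is_double_ward_quasigroup star e.

Lemma double_ward_square_const (y w : Q) :
  star (star (star e e) w) w = star (star e y) y.
Proof.
  destruct star_double_ward as [[HL _] DW].
  destruct (HL (star e y) w) as [z [Hz _]].
  rewrite <- Hz. apply DW.
Qed.

Lemma double_ward_idem : star e e = e.
Proof.
  pose proof (double_ward_square_const e e) as H.
  apply (quasigroup_cancel_r (proj1 star_double_ward)) in H.
  exact (quasigroup_cancel_r (proj1 star_double_ward) _ _ _ H).
Qed.

Lemma double_ward_reduced (x y z : Q) :
  star (star e (star x z)) (star (star e y) z) = star x y.
Proof.
  pose proof (proj2 star_double_ward x y z) as DW.
  rewrite double_ward_idem in DW. exact DW.
Qed.

End DoubleWard.

Theorem proposition4p3 (Q : Type) (star : Q -> Q -> Q) (e : Q) :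
  is_double_ward_quasigroup star e ->
  is_ward_quasigroup (fun x y => star (star e x) y).
Proof.
  intros Hdw.
  split.
  - exact (quasigroup_precompose_left_mul (proj1 Hdw) e).
  - intros x y z. apply (double_ward_reduced Hdw).
Qed.
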